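(* Let $k<m$ be positive integers such that $m\ne k(c^2-1)+1$ for every integer $c\ge 2$. Then there exists a single-category instance $I$ with $m$ goods, cardinality constraint $k$, and some number $n$ of agents with $kn\ge m$, such that $$\frac{\text{OPT-USW}(I)}{\max_{\mathcal{A}\in \mathcal{C}_k(I)}\text{USW}(\mathcal{A})}\ge \frac{1}{2}\left(-1+\sqrt{1+\frac{m-1}{k}}\right).$$
   Context: A single-category instance consists of $n$ agents and a set $M$ of $m$ indivisible goods; each agent $i$ has an additive utility function $u_i:2^M\to\mathbb{R}_{\ge 0}$ with $u_i(\emptyset)=0$ and $u_i(M)=1$. An allocation is a partition $(A_1,\dots,A_n)$ of $M$, agent $i$ receiving $A_i$. It is cardinal (for constraint $k$) if $|A_i|\le k$ for all $i$; $\mathcal{C}_k(I)$ is the set of cardinal allocations. $\text{USW}(\mathcal{A})=\sum_i u_i(A_i)$ and $\text{OPT-USW}(I)$ is its maximum over all allocations. *)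

From HB Require Import structures.
From mathcomp Require Import all_boot all_order all_algebra.
From mathcomp Require Import reals.
Set Implicit Arguments. Unset Strict Implicit. Unset Printing Implicit Defensive.
Import Order.TTheory GRing.Theory Num.Theory.
Local Open Scope ring_scope.

(* A single-category instance with n agents and m goods: an additive utility
   is determined by its values on single goods, u i g = u_i({g}). *)
Definition instance (R : realType) (n m : nat) := 'I_n -> 'I_m -> R.

Definition valid_instance (R : realType) (n m : nat) (u : instance R n m) : Prop :=
  (forall i g, 0 <= u i g) /\ (forall i, \sum_(g < m) u i g = 1).

(* An allocation (partition of the goods into n bundles) is given by the
   owner of each good: A_i = [set g | f g == i]. *)
Definition allocation (n m : nat) := {ffun 'I_m -> 'I_n}.

Definition bundle (n m : nat) (f : allocation n m) (i : 'I_n) : {set 'I_m} :=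
  [set g | f g == i].

Definition util (R : realType) (n m : nat) (u : instance R n m) (i : 'I_n)
  (S : {set 'I_m}) : R := \sum_(g in S) u i g.

Definition cardinal (n m k : nat) (f : allocation n m) : bool :=
  [forall i, #|bundle f i| <= k]%N.

Definition USW (R : realType) (n m : nat) (u : instance R n m) (f : allocation n m) : R :=
  \sum_(i < n) util u i (bundle f i).

(* OPT-USW: maximum over all allocations (USW >= 0, so 0 is a safe seed). *)
Definition OPT_USW (R : realType) (n m : nat) (u : instance R n m) : R :=
  \big[Num.max/0]_(f : allocation n m) USW u f.

Definition max_cardinal_USW (R : realType) (n m k : nat) (u : instance R n m) : R :=
  \big[Num.max/0]_(f : allocation n m | cardinal k f) USW u f.

(* Agents 0, ..., c-1 each value their own block of k*c goods uniformly, and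
   all remaining agents value only the last good.  An optimal allocation hands
   every block to its agent and the last good to someone else, for welfare
   c + 1.  Under the cardinality constraint an agent i < c gets at most
   k goods worth 1/(k c) each, so these agents together get at most 1, and the
   last good contributes at most 1 more.  With m agents and c maximal such
   that k c^2 <= m - 1, we get 1 + (m - 1)/k <= (c + 2)^2, so the ratio
   (c + 1)/2 is at least the claimed bound. *)
From HB Require Import structures.
From mathcomp Require Import all_boot all_order all_algebra.
From mathcomp Require Import reals.
From mathcomp Require Import lra zify.
Import Order.TTheory GRing.Theory Num.Theory.
Local Open Scope ring_scope.

Lemma sumr_if_interval (V : nmodType) (n a b : nat) (r : V) :
  (a <= b <= n)%N ->
  \sum_(i < n) (if (a <= i < b)%N then r else 0) = r *+ (b - a).
Proof.
move=> /andP[le_ab le_bn].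
rewrite -(big_mkord xpredT (fun i => if (a <= i < b)%N then r else 0)).
rewrite (@big_cat_nat _ _ _ a) ?(leq_trans le_ab) //= (@big_cat_nat _ _ _ b a n) //=.
rewrite big1_seq ?add0r => [|i]; last first.
  by rewrite mem_index_iota => /andP[_ /andP[_ lt_ia]]; rewrite leqNgt lt_ia.
rewrite [X in _ + X]big1_seq ?addr0 => [|i]; last first.
  by rewrite mem_index_iota => /andP[_ /andP[le_bi _]]; rewrite ltnNge le_bi andbF.
rewrite -sumr_const_nat; apply: eq_big_nat => i /andP[-> ->] //.
Qed.

Section Welfare.
Context {R : realType} {n m : nat}.
Implicit Types (u : instance R n m) (f : allocation n m).

Lemma USWE u f : USW u f = \sum_(g < m) u (f g) g.
Proof.
rewrite /USW /util; under eq_bigr do rewrite big_mkcond /=.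
rewrite exchange_big /=; apply: eq_bigr => g _.
rewrite -big_mkcond /=; under eq_bigl do rewrite inE eq_sym.
by rewrite big_pred1_eq.
Qed.

Lemma USW_common (w : 'I_m -> R) f : USW (fun=> w) f = \sum_(g < m) w g.
Proof. by rewrite USWE. Qed.

Lemma USW_le_OPT u f : USW u f <= OPT_USW u.
Proof. exact: le_bigmax. Qed.

Lemma USW_le_max_cardinal k u f : cardinal k f -> USW u f <= max_cardinal_USW k u.
Proof. exact: le_bigmax_cond. Qed.

Lemma max_cardinal_USW_le k u (x : R) :
  0 <= x -> (forall f, cardinal k f -> USW u f <= x) -> max_cardinal_USW k u <= x.
Proof. exact: bigmax_le. Qed.

Lemma injective_cardinal k f : (0 < k)%N -> injective f -> cardinal k f.
Proof.
move=> k_gt0 f_inj; apply/forallP => i; apply: leq_trans k_gt0.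
apply/card_le1_eqP => g h; rewrite /bundle !inE => /eqP fg /eqP fh.
by apply: f_inj; rewrite fg fh.
Qed.

Lemma util_le_card u i (S : {set 'I_m}) (a : R) k :
  0 <= a -> (forall g, u i g <= a) -> (#|S| <= k)%N -> util u i S <= a *+ k.
Proof.
move=> a_ge0 le_ua le_Sk; apply: (@le_trans _ _ (a *+ #|S|)).
  by rewrite -sumr_const; apply: ler_sum => g _.
exact: ler_wpMn2l.
Qed.

End Welfare.

Lemma exists_max_square (k m : nat) : (0 < k)%N -> (k <= m)%N ->
  exists2 c, (0 < c)%N & (k * c * c <= m < k * c.+1 * c.+1)%N.
Proof.
move=> k_gt0 le_km.
have c1 : exists c, (k * c * c <= m)%N by exists 1%N; rewrite !muln1.
have c_bounded c : (k * c * c <= m)%N -> (c <= m)%N.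
  case: c => // c le_cm; apply: leq_trans le_cm.
  by rewrite -mulnA (leq_trans (leq_pmulr _ _) (leq_pmull _ k_gt0)).
case: (ex_maxnP c1 c_bounded) => c le_cm c_max.
exists c; last by rewrite le_cm ltnNge; apply/negP => /c_max; rewrite ltnn.
by case: c le_cm c_max => // _ /(_ 1%N); rewrite !muln1 => /(_ le_km).
Qed.

Lemma sqrt_le_succ_square (R : rcfType) (k m c : nat) :
  (0 < k)%N -> (m < k * c.+1 * c.+1)%N ->
  Num.sqrt (1 + m%:R / k%:R) <= c%:R + 2 :> R.
Proof.
move=> k_gt0 lt_mk.
have k_gt0R : 0 < k%:R :> R by rewrite ltr0n.
have : (k + m <= k * (c + 2) * (c + 2))%N by nia.
rewrite -(ler_nat R) natrD !natrM natrD => le_km.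
rewrite -(ger0_norm (_ : 0 <= c%:R + 2 :> R)) ?addr_ge0 // -sqrtr_sqr.
by apply: ler_wsqrtr; rewrite -lerBrDl ler_pdivrMr //; nra.
Qed.

Lemma half_pred_le_ratio (R : realFieldType) (x s a b : R) :
  0 <= x -> s <= x + 2 -> x + 1 <= a -> 0 < b -> b <= 2 -> 1 / 2 * (-1 + s) <= a / b.
Proof. by move=> *; rewrite ler_pdivlMr //; nra. Qed.

Section BlockInstance.
Variables (R : realType) (n m k c : nat).
Hypotheses (k_gt0 : (0 < k)%N) (c_gt0 : (0 < c)%N) (c_lt_n : (c < n)%N).
Hypothesis blocks_lt_m : (c * (k * c) < m)%N.

Local Notation K := (k * c)%N.

Definition interval_util (r : R) (a b : nat) (g : 'I_m) : R :=
  if (a <= g < b)%N then r else 0.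

Definition block_instance : instance R n m := fun i =>
  if (i < c)%N then interval_util K%:R^-1 (i * K) (i * K + K)
  else interval_util 1 m.-1 m.

Let K_gt0 : (0 < K)%N. Proof. by rewrite muln_gt0 k_gt0. Qed.
Let KR_neq0 : K%:R != 0 :> R. Proof. by rewrite pnatr_eq0 -lt0n. Qed.

Let interval_util_ge0 r a b g : 0 <= r -> 0 <= interval_util r a b g.
Proof. by rewrite /interval_util; case: ifP. Qed.

Let sum_interval_util r a b : (a <= b <= m)%N ->
  \sum_(g < m) interval_util r a b g = r *+ (b - a).
Proof. exact: sumr_if_interval. Qed.

Let sum_last_good : \sum_(g < m) interval_util 1 m.-1 m g = 1 :> R.
Proof.
have m_gt0 : (0 < m)%N by apply: leq_ltn_trans blocks_lt_m.
by rewrite sum_interval_util ?leq_pred ?leqnn // (_ : (m - m.-1)%N = 1%N) //; lia.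
Qed.

Lemma block_instance_valid : valid_instance block_instance.
Proof.
split=> [i g|i]; rewrite /block_instance; case: ifP => lt_ic.
- by apply: interval_util_ge0; rewrite invr_ge0.
- exact: interval_util_ge0.
- rewrite sum_interval_util ?leq_addr /=; first by rewrite addKn -[_ *+ K]mulr_natr mulVf.
  by rewrite -mulSnr (leq_trans _ (ltnW blocks_lt_m)) // leq_mul2r lt_ic orbT.
- exact: sum_last_good.
Qed.

Lemma block_instance_OPT_ge : c.+1%:R <= OPT_USW block_instance.
Proof.
pose c_agent : 'I_n := Ordinal c_lt_n.
pose owner (g : 'I_m) := if (g < c * K)%N then insubd c_agent (g %/ K)%N else c_agent.
have owner_block (g : 'I_m) : (g < c * K)%N -> owner g = (g %/ K)%N :> nat.
  move=> lt_g; rewrite /owner lt_g insubdK //.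
  by apply: ltn_trans c_lt_n; rewrite ltn_divLR.
have owner_rest (g : 'I_m) : (c * K <= g)%N -> owner g = c :> nat.
  by move=> le_g; rewrite /owner ltnNge le_g.
apply: le_trans (USW_le_OPT _ [ffun g => owner g]); rewrite USWE.
have own g : block_instance ([ffun g => owner g] g) g =
    interval_util K%:R^-1 0 (c * K) g + interval_util 1 m.-1 m g.
  rewrite ffunE /block_instance /interval_util /=.
  case: (ltnP g (c * K)) => [lt_g|le_g]; last by rewrite owner_rest // ltnn add0r.
  rewrite owner_block // ltn_divLR // lt_g.
  rewrite leq_trunc_div /= {1}(divn_eq g K) ltn_add2l ltn_pmod //.
  by rewrite ifF ?addr0 //; apply/negbTE; rewrite negb_and -ltnNge; lia.
under eq_bigr do rewrite own.
rewrite big_split /= sum_last_good sum_interval_util ?(ltnW blocks_lt_m) //.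
by rewrite subn0 -[K%:R^-1 *+ _]mulr_natr (natrM _ c K) mulrCA mulVf // mulr1 -natr1.
Qed.

Let util_block_le (i : 'I_n) (S : {set 'I_m}) :
  (i < c)%N -> (#|S| <= k)%N -> util block_instance i S <= c%:R^-1.
Proof.
move=> lt_ic le_Sk; have -> : c%:R^-1 = K%:R^-1 *+ k :> R.
  by rewrite -[K%:R^-1 *+ _]mulr_natr natrM invfM mulrAC mulVf ?mul1r // pnatr_eq0 -lt0n.
apply: util_le_card => // [|g]; first by rewrite invr_ge0.
by rewrite /block_instance /= lt_ic /interval_util; case: ifP; rewrite ?invr_ge0.
Qed.

Let util_rest (i : 'I_n) (S : {set 'I_m}) : (c <= i)%N ->
  util block_instance i S = util (fun=> interval_util 1 m.-1 m) i S.
Proof. by move=> le_ci; rewrite /util /block_instance /= ltnNge le_ci. Qed.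

Lemma block_instance_max_cardinal_le : max_cardinal_USW k block_instance <= 2.
Proof.
apply: max_cardinal_USW_le => // f card_f.
have util_le i : util block_instance i (bundle f i) <=
    (if (0 <= i < c)%N then c%:R^-1 else 0) +
    util (fun=> interval_util 1 m.-1 m) i (bundle f i).
  case: (ltnP i c) => [lt_ic|le_ci] /=; last by rewrite util_rest // add0r.
  rewrite -[leLHS]addr0; apply: lerD.
    by apply: util_block_le; move/forallP: card_f.
  by apply: sumr_ge0 => g _; apply: interval_util_ge0.
apply: le_trans (ler_sum _ (fun i _ => util_le i)) _.
rewrite big_split sumr_if_interval ?(ltnW c_lt_n) // -/(USW _ f) USW_common.
rewrite sum_last_good subn0 -[c%:R^-1 *+ _]mulr_natr mulVf //.
by rewrite pnatr_eq0 -lt0n.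
Qed.

Lemma block_instance_max_cardinal_ge1 (le_mn : (m <= n)%N) :
  1 <= max_cardinal_USW k block_instance.
Proof.
pose f : allocation n m := [ffun g => widen_ord le_mn g].
have f_inj : injective f by move=> g h; rewrite /f !ffunE => /(congr1 val) /= /ord_inj.
apply: le_trans (USW_le_max_cardinal _ _ _ (injective_cardinal _ _ k_gt0 f_inj)).
have c_le_last : (c <= m.-1)%N.
  by have := leq_pmulr c K_gt0; move: blocks_lt_m; lia.
have lt_last : (m.-1 < m)%N by move: blocks_lt_m; lia.
rewrite USWE (bigD1 (Ordinal lt_last)) //= -[leLHS]addr0; apply: lerD.
  rewrite /block_instance ffunE /= ltnNge c_le_last /interval_util.
  by rewrite /= leqnn lt_last.
by rewrite sumr_ge0 // => g _; case: block_instance_valid.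
Qed.

End BlockInstance.

Theorem lemma2 (R : realType) (k m : nat) :
  (0 < k)%N -> (k < m)%N ->
  (forall c : nat, (2 <= c)%N -> m <> (k * (c ^ 2 - 1) + 1)%N) ->
  exists (n : nat) (u : instance R n m),
    valid_instance u /\ (m <= k * n)%N /\
    OPT_USW u / max_cardinal_USW k u >=
      (1 / 2) * (-1 + Num.sqrt (1 + (m%:R - 1) / k%:R)).
Proof.
(* The exceptional values of m are not needed: the construction works for all k < m. *)
move=> k_gt0 lt_km _; case: m lt_km => [//|m] le_km.
have [c c_gt0 /andP[le_cm lt_mc]] := exists_max_square _ _ k_gt0 le_km.
have c_lt_n : (c < m.+1)%N by nia.
have blocks_lt_m : (c * (k * c) < m.+1)%N by rewrite ltnS; nia.
exists m.+1, (block_instance R m.+1 m.+1 k c); split.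
  exact: block_instance_valid.
split; first by rewrite leq_pmull.
rewrite -[m.+1%:R]natr1 addrK.
apply: (@half_pred_le_ratio _ c%:R) => //.
- exact: sqrt_le_succ_square.
- by rewrite natr1; apply: block_instance_OPT_ge.
- by apply: lt_le_trans ltr01 _; apply: block_instance_max_cardinal_ge1.
- exact: block_instance_max_cardinal_le.
Qed.
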